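(* Let $(e_n)_{n\in N}$ and $(e'_n)_{n\in N'}$ be normalised bimonotone unconditional basic sequences, $X=\overline{\mathrm{span}}\{e_n\}$, $X'=\overline{\mathrm{span}}\{e'_n\}$. Then every homeomorphism $T:P(X)\to P(X')$ maps $X$ onto $X'$, the hair of $P(X)$ onto the hair of $P(X')$, the set of roots of $P(X)$ onto the set of roots of $P(X')$, and for each $n$ the set of type $t_n$ vectors of $X$ onto the set of type $t_n$ vectors of $X'$.
   Context: A type is a non-empty finite non-decreasing sequence of strictly positive rationals; $x\in X$ has type $(\lambda_1,\dots,\lambda_m)$ if $x=\sum_{i=1}^m\lambda_ie_{\sigma(i)}$ for an injection $\sigma:\{1,\dots,m\}\to N$. Enumerate the types as $(t_n)_{n\ge1}$ with $t_1=(1)$; $T_n$ is the set of vectors of type $t_n$. $H_n$ is the metric space obtained by gluing $n$ isometric copies of $[0,1]$ at a common endpoint $0_n$. For $x\in T_n$, $H(x)$ is an isometric copy of $H_n$ (metric $d_x$) with special point identified with $x$, $H^0(x)=H(x)\setminus\{x\}$. $P(X)=X\sqcup\bigsqcup_n\bigsqcup_{x\in T_n}H^0(x)$ with metric $d$: $d=d_X$ on $X$; $d=d_x$ on $H^0(x)$; $d(y,z)=d_X(y,x)+d_x(x,z)$ for $y\in X,z\in H^0(x)$; $d(y,z)=d_x(y,x)+d_X(x,x')+d_{x'}(x',z)$ for $y\in H^0(x),z\in H^0(x')$, $x\neq x'$. The set of roots is $R=\bigcup_nT_n$ and the hair is $\bigcup_{x\in R}H^0(x)$. The same construction applied to $X'$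 gives $P(X')$. *)

From HB Require Import structures.
From mathcomp Require Import all_boot all_order all_algebra.
From mathcomp Require Import all_classical all_reals all_analysis.
Set Implicit Arguments. Unset Strict Implicit. Unset Printing Implicit Defensive.
Import Order.TTheory GRing.Theory Num.Theory.
Import numFieldNormedType.Exports.
Local Open Scope classical_set_scope.
Local Open Scope ring_scope.

Section Defs.
Variables (R : realType) (V : normedModType R).

Definition lin_span (e : nat -> V) (N : set nat) : set V :=
  [set x | exists (s : seq nat) (c : nat -> R),
     (forall n, n \in s -> N n) /\ x = \sum_(n <- s) c n *: e n].

Definition closed_span (e : nat -> V) (N : set nat) : set V :=
  closure (lin_span e N).

Definition expansion (e : nat -> V) (N : set nat) (a : nat -> R) (x : V) : Prop :=
  (forall n, ~ N n -> a n = 0) /\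
  (fun k : nat => \sum_(0 <= n < k) a n *: e n) @ \oo --> x.

Definition basic_seq (e : nat -> V) (N : set nat) : Prop :=
  (forall n, N n -> e n != 0) /\
  (forall x, closed_span e N x -> exists! a, expansion e N a x).

Definition normalised (e : nat -> V) (N : set nat) : Prop :=
  forall n, N n -> `|e n| = 1.

Definition unconditional (e : nat -> V) (N : set nat) : Prop :=
  forall x a, closed_span e N x -> expansion e N a x ->
    forall p : nat -> nat, bijective p ->
      (fun k : nat => \sum_(0 <= n < k) a (p n) *: e (p n)) @ \oo --> x.

Definition bimonotone (e : nat -> V) (N : set nat) : Prop :=
  forall x a, closed_span e N x -> expansion e N a x -> forall k : nat,
    `|\sum_(0 <= n < k) a n *: e n| <= `|x| /\
    `|x - \sum_(0 <= n < k) a n *: e n| <= `|x|.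

Definition nbu_basic_seq (e : nat -> V) (N : set nat) : Prop :=
  [/\ basic_seq e N, normalised e N, unconditional e N & bimonotone e N].

Definition has_type (e : nat -> V) (N : set nat) (lam : seq rat) (x : V) : Prop :=
  exists sigma : 'I_(size lam) -> nat,
    injective sigma /\ (forall i, N (sigma i)) /\
    x = \sum_(i < size lam) (ratr (nth 0 lam i) : R) *: e (sigma i).

End Defs.

Definition is_type (lam : seq rat) : Prop :=
  lam != [::] /\ sorted <=%R lam /\ all (fun q => 0 < q) lam.

Definition type_enum (t : nat -> seq rat) : Prop :=
  [/\ forall n, (0 < n)%N -> is_type (t n),
      forall lam, is_type lam -> exists! n, (0 < n)%N /\ t n = lam
    & t 1%N = [:: 1]].

(** points of P(X): either a point x of X, or a point of the hair H^0(x)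
    at root x in T_n: leg i (0 <= i < n), at distance s in (0,1] from x *)
Inductive ppoint (R : Type) (V : Type) :=
| PBase of V
| PHair of nat & V & nat & R.
Arguments PBase {R V}.
Arguments PHair {R V}.

Section PX.
Variables (R : realType) (V : normedModType R).
Variables (t : nat -> seq rat) (e : nat -> V) (N : set nat).

Definition Tset (n : nat) : set V :=
  [set x | closed_span e N x /\ has_type e N (t n) x].

Definition Pcarrier : set (ppoint R V) :=
  [set p | match p with
   | PBase x => closed_span e N x
   | PHair n x i s => [/\ (0 < n)%N, Tset n x, (i < n)%N & 0 < s <= 1]
   end].

Definition Pdist (p q : ppoint R V) : R :=
  match p, q with
  | PBase y, PBase z => `|y - z|
  | PBase y, PHair _ x _ s => `|y - x| + s
  | PHair _ x _ s, PBase y => s + `|x - y|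
  | PHair _ x i s, PHair _ x' j s' =>
      if x == x' then (if i == j then `|s - s'| else s + s')
      else s + `|x - x'| + s'
  end.

Definition Pbase : set (ppoint R V) :=
  [set p | Pcarrier p /\ exists x, p = PBase x].
Definition Phair : set (ppoint R V) :=
  [set p | Pcarrier p /\ exists n x i s, p = PHair n x i s].
Definition Proots : set (ppoint R V) :=
  [set p | Pcarrier p /\ exists n x, (0 < n)%N /\ Tset n x /\ p = PBase x].
Definition PT (n : nat) : set (ppoint R V) :=
  [set p | Pcarrier p /\ exists x, Tset n x /\ p = PBase x].

End PX.

Definition metric_continuous {R : realType} {A B : Type}
  (S : set A) (d : A -> A -> R) (d' : B -> B -> R) (f : A -> B) : Prop :=
  forall p, S p -> forall eps : R, 0 < eps -> exists2 delta : R, 0 < delta &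
    forall q, S q -> d p q < delta -> d' (f p) (f q) < eps.

Definition homeomorphism {R : realType} {A B : Type}
  (S : set A) (d : A -> A -> R) (S' : set B) (d' : B -> B -> R) (f : A -> B) : Prop :=
  (forall p, S p -> S' (f p)) /\
  exists g : B -> A,
    [/\ forall q, S' q -> S (g q),
        forall p, S p -> g (f p) = p,
        forall q, S' q -> f (g q) = q,
        metric_continuous S d d' f
      & metric_continuous S' d' d g].

(* The parts of P(X) are told apart by triods, i.e. three arcs meeting only at a
   common end point.  A point of the hair has a neighbourhood, an open piece of its
   leg, containing no triod.  Every neighbourhood of a root contains one: X either
   has two independent directions, or it is a line and every point [c e_k], [c >= 0],
   is approached by roots [q e_k] ([q] rational) carrying hairs.  Homeomorphisms carry
   triods to triods, so a point of X goes to X, except possibly on the negative ray of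
   a line, which has no triods either; there, the whole ray would be mapped into a
   single leg, and a limit point of the images would pull back to a limit of points at
   mutual distance at least 1.  Hence T maps X onto X' and the hair onto the hair.
   The image of a leg of a root [x] is an arc leaving [T x] through the hair, so it lies
   in a leg of [T x] and [T x] is a root; distinct legs go to distinct legs, so the
   number [n] of legs, i.e. the index of the type [t_n], is preserved. *)

From HB Require Import structures.
From mathcomp Require Import all_boot all_order all_algebra.
From mathcomp Require Import all_classical all_reals all_analysis.
From mathcomp Require Import lra ring.
Set Implicit Arguments. Unset Strict Implicit. Unset Printing Implicit Defensive.
Import Order.TTheory GRing.Theory Num.Theory.
Import numFieldNormedType.Exports.
Local Open Scope classical_set_scope.
Local Open Scope ring_scope.
Local Close Scope term_scope.

Section BasicSequence.
Variables (R : realType) (V : normedModType R) (e : nat -> V) (N : set nat).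

Definition fin_coef (I : finType) (sg : I -> nat) (lam : I -> R) (k : nat) : R :=
  \sum_(i | sg i == k) lam i.

Lemma sum_fin_coef (I : finType) (sg : I -> nat) (lam : I -> R) K :
  (forall i, (sg i < K)%N) ->
  \sum_(0 <= k < K) fin_coef sg lam k *: e k = \sum_i lam i *: e (sg i).
Proof.
move=> sgK; rewrite /fin_coef.
under eq_bigr do rewrite scaler_suml.
rewrite big_nat (exchange_big_dep xpredT) //=; apply: eq_bigr => i _.
rewrite big_mkcond /= (bigD1_seq (sg i)) ?iota_uniq ?mem_iota ?sgK //=; last first.
  by rewrite add0n subn0.
rewrite eqxx /= big1 ?addr0 // => k /negbTE nk.
by rewrite eq_sym nk andbF.
Qed.

Lemma fin_coefE (I : finType) (sg : I -> nat) (lam : I -> R) j :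
  injective sg -> fin_coef sg lam (sg j) = lam j.
Proof.
move=> isg; rewrite /fin_coef (big_pred1 j) // => i /=.
by apply/eqP/eqP => [/isg|->].
Qed.

Lemma fin_coef_out (I : finType) (sg : I -> nat) (lam : I -> R) k :
  (forall i, sg i <> k) -> fin_coef sg lam k = 0.
Proof. by move=> sgk; rewrite /fin_coef big1 // => i /eqP /sgk. Qed.

Lemma fin_coef_supp (I : finType) (sg : I -> nat) (lam : I -> R) k :
  injective sg -> (forall i, lam i != 0) ->
  (k \in map sg (enum I)) = (fin_coef sg lam k != 0).
Proof.
move=> isg lam0; apply/mapP/idP => [[i _ ->]|]; first by rewrite fin_coefE.
case: (pselect (exists i, sg i = k)) => [[i <-]|nk]; first by exists i; rewrite ?mem_enum.
by rewrite fin_coef_out ?eqxx // => i ik; apply: nk; exists i.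
Qed.

Lemma map_fin_coef_type (l : seq rat) (sg : 'I_(size l) -> nat) : injective sg ->
  map (fin_coef sg (fun i => ratr (nth 0 l i))) (map sg (enum 'I_(size l))) =
  map (ratr : rat -> R) l.
Proof.
move=> isg; rewrite -[in RHS](mkseq_nth 0 l) /mkseq -val_enum_ord -!map_comp.
by apply: eq_map => i /=; rewrite fin_coefE.
Qed.

Lemma expansion_fin_sum (I : finType) (sg : I -> nat) (lam : I -> R) :
  (forall i, N (sg i)) ->
  expansion e N (fin_coef sg lam) (\sum_i lam i *: e (sg i)).
Proof.
move=> Nsg; split => [k Nk|].
  by apply: fin_coef_out => i ik; apply: Nk; rewrite -ik.
apply: cvg_near_cst; exists (\max_i (sg i).+1)%N => // K /= HK.
apply: sum_fin_coef => i; apply: leq_trans HK.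
exact: (leq_bigmax_cond (F := fun i => (sg i).+1)).
Qed.

Lemma closed_span_fin_sum (I : finType) (sg : I -> nat) (lam : I -> R) :
  (forall i, N (sg i)) -> injective sg ->
  closed_span e N (\sum_i lam i *: e (sg i)).
Proof.
move=> Nsg isg; apply: subset_closure.
exists (map sg (enum I)), (fin_coef sg lam); split; first by move=> n /mapP [i _ ->].
by rewrite big_map big_enum /=; apply: eq_bigr => i _; rewrite fin_coefE.
Qed.

Lemma psum_supp1 (a : nat -> R) k K : (forall n, n != k -> a n = 0) ->
  (k < K)%N -> \sum_(0 <= n < K) a n *: e n = a k *: e k.
Proof.
move=> ak kK; rewrite (bigD1_seq k) ?iota_uniq ?mem_iota //=; last by rewrite add0n subn0.
by rewrite big1 ?addr0 // => n nk; rewrite ak // scale0r.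
Qed.

Lemma expansion_closed_span a z : expansion e N a z -> closed_span e N z.
Proof.
move=> [a0 cv]; apply: (closed_cvg _ (@closed_closure _ _) _ _ cv).
apply: nearW => K; apply: subset_closure.
exists [seq n <- iota 0 K | `[< N n >]], a; split.
  by move=> n; rewrite mem_filter => /andP [/asboolP].
rewrite big_filter [in RHS]big_mkcond /index_iota subn0; apply: eq_bigr => n _.
by case: asboolP => // nN; rewrite a0 // scale0r.
Qed.

Lemma expansion_eventually a z w K0 : expansion e N a z ->
  (forall K, (K0 <= K)%N -> \sum_(0 <= n < K) a n *: e n = w) -> z = w.
Proof.
move=> [_ cv] aw; apply: (@cvg_unique _ (@norm_hausdorff R V) _ _ z w cv).
by apply: cvg_near_cst; exists K0 => // K /= /aw.
Qed.

Lemma closed_span0 : closed_span e N 0.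
Proof. by apply: subset_closure; exists [::], (fun=> 0); split => //; rewrite big_nil. Qed.

Section Basic.
Hypothesis be : basic_seq e N.

Lemma expansion_uniq a b x : closed_span e N x ->
  expansion e N a x -> expansion e N b x -> a = b.
Proof.
move=> cx ea eb; have [a0 [_ a0u]] := be.2 x cx.
by rewrite -(a0u a ea) -(a0u b eb).
Qed.

Lemma closed_span_expansion z : closed_span e N z -> exists a, expansion e N a z.
Proof. by move=> cz; have [a [ea _]] := be.2 z cz; exists a. Qed.

Lemma closed_span_empty z : (forall k, ~ N k) -> closed_span e N z -> z = 0.
Proof.
move=> N0 /closed_span_expansion [a ea]; apply: (expansion_eventually (K0 := 0) ea).
by move=> K _; rewrite big1 // => n _; rewrite ea.1 // scale0r.
Qed.

Lemma closed_span_line z k : N k -> (forall j, N j -> j = k) -> closed_span e N z ->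
  exists c, z = c *: e k.
Proof.
move=> Nk Nk1 /closed_span_expansion [a ea]; exists (a k).
apply: (expansion_eventually (K0 := k.+1) ea) => K kK.
apply: psum_supp1 => // n nk; apply: ea.1 => Nn.
by move: nk; rewrite (Nk1 _ Nn) eqxx.
Qed.

Lemma closed_spanD_scale y k c : closed_span e N y -> N k ->
  closed_span e N (y + c *: e k).
Proof.
move=> /closed_span_expansion [a [a0 cv]] Nk.
apply: (@expansion_closed_span (fun n => a n + (if n == k then c else 0))); split.
  move=> n Nn; rewrite a0 // add0r; case: eqP => // nk.
  by case: Nn; rewrite nk.
have -> : (fun K => \sum_(0 <= n < K) (a n + (if n == k then c else 0)) *: e n) =
  (fun K => \sum_(0 <= n < K) a n *: e n +
            \sum_(0 <= n < K) (if n == k then c else 0) *: e n).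
  by apply: funext => K; rewrite -big_split; apply: eq_bigr => n _; rewrite scalerDl.
apply: cvgD => //; apply: cvg_near_cst; exists k.+1 => // K /= kK.
by rewrite (@psum_supp1 (fun n => if n == k then c else 0) k) ?eqxx // => n /negbTE ->.
Qed.

Lemma closed_span_scale k c : N k -> closed_span e N (c *: e k).
Proof. by move=> Nk; rewrite -[_ *: _]add0r; apply: closed_spanD_scale => //; exact: closed_span0. Qed.

Lemma scale2_eq0 a b al bt : N a -> N b -> a != b ->
  al *: e a + bt *: e b = 0 -> al = 0 /\ bt = 0.
Proof.
move=> Na Nb ab abt0.
pose sg (i : bool) := if i then a else b.
pose lam (i : bool) := if i then al else bt.
have isg : injective sg.
  by case; case => //= /eqP; rewrite ?(negbTE ab) // eq_sym (negbTE ab).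
have Nsg : forall i, N (sg i) by case.
have ez : expansion e N (fun=> 0) 0.
  split => //; apply: cvg_near_cst; apply: nearW => K.
  by rewrite big1 // => n _; rewrite scale0r.
have := expansion_fin_sum lam Nsg; rewrite big_bool /= abt0 => ex.
have coef0 := expansion_uniq closed_span0 ex ez.
have c1 : fin_coef sg lam (sg true) = 0 by rewrite coef0.
have c2 : fin_coef sg lam (sg false) = 0 by rewrite coef0.
by rewrite !fin_coefE in c1 c2.
Qed.

Lemma has_type_uniq l l' x : is_type l -> is_type l' ->
  has_type e N l x -> has_type e N l' x -> l = l'.
Proof.
move=> [_ [sl pl]] [_ [sl' pl']] [sg [isg [Nsg ->]]] [sg' [isg' [Nsg' ex]]].
pose lam (i : 'I_(size l)) := (ratr (nth 0 l i) : R).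
pose lam' (i : 'I_(size l')) := (ratr (nth 0 l' i) : R).
have lam0 : forall i, lam i != 0.
  by move=> i; rewrite lt0r_neq0 // ltr0q; exact/(all_nthP 0 pl).
have lam0' : forall i, lam' i != 0.
  by move=> i; rewrite lt0r_neq0 // ltr0q; exact/(all_nthP 0 pl').
have coef_eq : fin_coef sg lam = fin_coef sg' lam'.
  apply: (expansion_uniq (closed_span_fin_sum (lam := lam) Nsg isg)).
    exact: expansion_fin_sum.
  by rewrite ex; exact: expansion_fin_sum.
have supp_eq : perm_eq (map sg (enum 'I_(size l))) (map sg' (enum 'I_(size l'))).
  apply: uniq_perm; rewrite ?(map_inj_uniq isg) ?(map_inj_uniq isg') ?enum_uniq //.
  by move=> k; rewrite (fin_coef_supp k isg lam0) (fin_coef_supp k isg' lam0') coef_eq.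
have := perm_map (fin_coef sg lam) supp_eq.
rewrite {2}coef_eq !map_fin_coef_type // => /(perm_map_inj (@fmorph_inj _ R ratr)).
exact: le_sorted_eq.
Qed.

End Basic.
End BasicSequence.

Lemma Tset_index_uniq (R : realType) (V : normedModType R) t (e : nat -> V) N n m x :
  type_enum t -> basic_seq e N -> (0 < n)%N -> (0 < m)%N ->
  Tset t e N n x -> Tset t e N m x -> n = m.
Proof.
move=> [ty tuniq _] be n0 m0 [_ hn] [_ hm].
have tnm := has_type_uniq be (ty _ n0) (ty _ m0) hn hm.
have [k [_ tk]] := tuniq _ (ty _ n0).
by rewrite -(tk n (conj n0 erefl)) -(tk m (conj m0 (esym tnm))).
Qed.

Lemma unit_segment0 {R : realType} : 0 <= (0 : R) <= 1. Proof. by rewrite lexx ler01. Qed.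
Lemma unit_segment1 {R : realType} : 0 <= (1 : R) <= 1. Proof. by rewrite lexx ler01. Qed.

Section Segment.
Variable R : realType.

Definition clamp (a b u : R) := if u <= a then a else if u <= b then u else b.

Lemma clamp_lipschitz a b u u' : a <= b -> `|clamp a b u - clamp a b u'| <= `|u - u'|.
Proof.
move=> ab; rewrite /clamp.
have [h|h] := leP 0 (u - u'); [rewrite (ger0_norm h)|rewrite (ltr0_norm h)];
rewrite ler_norml; repeat case: ifP => /= ?; apply/andP; split; lra.
Qed.

Lemma clamp_id a b u : a <= u <= b -> clamp a b u = u.
Proof.
rewrite /clamp => /andP [au ub]; case: ifP => // ua; last by rewrite ub.
by apply/eqP; rewrite eq_le ua au.
Qed.

Lemma clamp_in a b u : a <= b -> a <= clamp a b u <= b.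
Proof. by move=> ab; rewrite /clamp; repeat case: ifP => /= ?; apply/andP; split; lra. Qed.

(* Extending [f] by constants outside [a, b] reduces to the IVT for continuous maps. *)
Lemma ivt_segment (f : R -> R) a b v : a <= b ->
  metric_continuous [set u | a <= u <= b] (fun u u' => `|u - u'|)
    (fun x y => `|x - y|) f ->
  Num.min (f a) (f b) <= v <= Num.max (f a) (f b) ->
  exists2 c, a <= c <= b & f c = v.
Proof.
move=> ab fc fv.
pose F u := f (clamp a b u).
have cF : continuous F.
  move=> u; apply/cvgrPdist_lt => eps eps0.
  have [del del0 fdel] := fc _ (clamp_in u ab) eps eps0.
  exists del => //= y /= uy; apply: fdel; first exact: clamp_in.
  exact: le_lt_trans (clamp_lipschitz _ _ ab) uy.
have Fa : F a = f a by rewrite /F clamp_id // lexx ab.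
have Fb : F b = f b by rewrite /F clamp_id // lexx ab.
rewrite -Fa -Fb in fv.
have [c + Fc] := IVT ab (continuous_subspaceT cF) fv.
rewrite in_itv /= => cab; exists c => //.
by rewrite -Fc /F clamp_id.
Qed.

Lemma locally_constant_segment (chi : R -> bool) (a b : R) : a <= b ->
  (forall u, a <= u <= b -> exists2 del, 0 < del &
     forall u', a <= u' <= b -> `|u - u'| < del -> chi u' = chi u) ->
  chi a = chi b.
Proof.
move=> ab chi_loc.
pose f u : R := if chi u then 1 else 0.
have fc : metric_continuous [set u | a <= u <= b] (fun u u' => `|u - u'|)
    (fun x y => `|x - y|) f.
  move=> u hu eps eps0; have [del del0 chi_del] := chi_loc u hu.
  by exists del => // u' hu' uu'; rewrite /f (chi_del u' hu' uu') subrr normr0.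
case: (boolP (chi a == chi b)) => [/eqP //|nab].
have fv : Num.min (f a) (f b) <= 2^-1 <= Num.max (f a) (f b).
  rewrite /f; move: nab; case: (chi a); case: (chi b) => //= _;
  rewrite ?ge_min ?le_max; apply/andP; split; apply/orP; lra.
have [c _] := ivt_segment ab fc fv.
by rewrite /f; case: (chi c) => h; lra.
Qed.

Lemma cvg_subseq01 (u : nat -> R) : (forall n, 0 < u n <= 1) ->
  exists (f : nat -> nat) (l : R), (forall J, (f J < f J.+1)%N) /\ 0 <= l <= 1 /\
    forall eps, 0 < eps -> exists J, forall j, (J <= j)%N -> `|l - u (f j)| < eps.
Proof.
move=> u01.
have bu : bounded_fun u.
  exists 1; split => // M M1 x _; have /andP [u0 u1] := u01 x.
  by rewrite /= ger0_norm ?(ltW u0) // (le_trans u1) // ltW.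
have [f f_incr cvf] := bolzano_weierstrass bu.
exists f, (lim ((u \o f) @ \oo)); split.
  move=> J; rewrite ltnNge; apply/negP => fJ.
  by have := f_incr J.+1 J; rewrite leEnat fJ ltnn.
split.
  apply/andP; split.
    by apply: limr_ge => //; apply: nearW => n /=; have /andP [/ltW] := u01 (f n).
  by apply: limr_le => //; apply: nearW => n /=; have /andP [] := u01 (f n).
move=> eps eps0; have [J _ HJ] := (cvgrPdist_lt _ _).1 cvf eps eps0.
by exists J => j Jj; exact: HJ.
Qed.

End Segment.

Section Triods.
Variables (R : realType) (A : Type) (S : set A) (d : A -> A -> R).

Definition is_path (g : R -> A) : Prop :=
  (forall u, 0 <= u <= 1 -> S (g u)) /\
  metric_continuous [set u | 0 <= u <= 1] (fun u u' => `|u - u'|) d g.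

Definition has_triod (B : set A) : Prop :=
  exists c g1 g2 g3, [/\ is_path g1, is_path g2 & is_path g3] /\ [/\
   g1 0 = c /\ g2 0 = c /\ g3 0 = c,
   g1 1 <> c /\ g2 1 <> c /\ g3 1 <> c,
   (forall u, 0 <= u <= 1 -> B (g1 u) /\ B (g2 u) /\ B (g3 u)) &
   (forall u u', 0 <= u <= 1 -> 0 <= u' <= 1 ->
      (g1 u = g2 u' -> g1 u = c) /\ (g1 u = g3 u' -> g1 u = c) /\
      (g2 u = g3 u' -> g2 u = c))].

Lemma lipschitz_path (g : R -> A) K : 0 <= K ->
  (forall u, 0 <= u <= 1 -> S (g u)) ->
  (forall u u', 0 <= u <= 1 -> 0 <= u' <= 1 -> d (g u) (g u') <= K * `|u - u'|) ->
  is_path g.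
Proof.
move=> K0 gS gK; split => // u hu eps eps0.
have K1 : 0 < K + 1 by lra.
exists (eps / (K + 1)); first by rewrite divr_gt0.
move=> u' hu' uu'; apply: le_lt_trans (gK _ _ hu hu') _.
rewrite ltr_pdivlMr // in uu'; have := normr_ge0 (u - u'); nra.
Qed.

Lemma path_ivt (phi : A -> R) (B : set A) g v :
  (forall p q, B p -> B q -> `|phi p - phi q| <= d p q) ->
  is_path g -> (forall u, 0 <= u <= 1 -> B (g u)) ->
  Num.min (phi (g 0)) (phi (g 1)) <= v <= Num.max (phi (g 0)) (phi (g 1)) ->
  exists2 c, 0 <= c <= 1 & phi (g c) = v.
Proof.
move=> phi_lip [_ gc] gB; apply: (ivt_segment (f := phi \o g) ler01).
move=> u hu eps eps0; have [del del0 gdel] := gc u hu eps eps0.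
exists del => // u' hu' uu'; apply: le_lt_trans (gdel u' hu' uu').
exact: phi_lip (gB _ hu) (gB _ hu').
Qed.

(* If both arms end on the same side of [phi c], both cross the level halfway to the
   nearer end value, and they do so at the same point of [B]. *)
Lemma crossing_arms (phi : A -> R) (B : set A) g1 g2 c :
  (forall p q, B p -> B q -> `|phi p - phi q| <= d p q) ->
  (forall p q, B p -> B q -> phi p = phi q -> p = q) ->
  is_path g1 -> is_path g2 ->
  (forall u, 0 <= u <= 1 -> B (g1 u) /\ B (g2 u)) ->
  g1 0 = c -> g2 0 = c ->
  0 < (phi (g1 1) - phi c) * (phi (g2 1) - phi c) ->
  exists u u', [/\ 0 <= u <= 1, 0 <= u' <= 1, g1 u = g2 u' & g1 u <> c].
Proof.
move=> phi_lip phi_inj p1 p2 gB g10 g20 same_side.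
wlog up1 : phi phi_lip phi_inj same_side / 0 < phi (g1 1) - phi c.
  move=> up; have [|down1] := ltrP 0 (phi (g1 1) - phi c); first exact: (up phi).
  apply: (up (fun x => - phi x)).
  - by move=> p q Bp Bq; rewrite -opprD normrN; exact: phi_lip.
  - by move=> p q Bp Bq /oppr_inj; exact: phi_inj.
  - by rewrite -!opprD mulrNN.
  - have : phi (g1 1) - phi c != 0.
      by apply/negP => /eqP h0; rewrite h0 mul0r ltxx in same_side.
    by move=> h0; rewrite -opprD oppr_gt0 lt_neqAle h0 down1.
have up2 : 0 < phi (g2 1) - phi c by move: same_side; rewrite pmulr_rgt0.
pose m := phi c + Num.min (phi (g1 1) - phi c) (phi (g2 1) - phi c) / 2.
have B1 u : 0 <= u <= 1 -> B (g1 u) by move=> /gB [].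
have B2 u : 0 <= u <= 1 -> B (g2 u) by move=> /gB [].
have cm : phi c < m by rewrite /m ltrDl divr_gt0 // lt_min up1 up2.
have m1 : m <= phi (g1 1).
  have : Num.min (phi (g1 1) - phi c) (phi (g2 1) - phi c) <= phi (g1 1) - phi c.
    by rewrite ge_min lexx.
  rewrite /m; lra.
have m2 : m <= phi (g2 1).
  have : Num.min (phi (g1 1) - phi c) (phi (g2 1) - phi c) <= phi (g2 1) - phi c.
    by rewrite ge_min lexx orbT.
  rewrite /m; lra.
have [u u01 hu] : exists2 u, 0 <= u <= 1 & phi (g1 u) = m.
  apply: (path_ivt phi_lip p1 B1); rewrite g10.
  by rewrite ge_min (ltW cm) le_max m1 orbT.
have [u' u'01 hu'] : exists2 u, 0 <= u <= 1 & phi (g2 u) = m.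
  apply: (path_ivt phi_lip p2 B2); rewrite g20.
  by rewrite ge_min (ltW cm) le_max m2 orbT.
exists u, u'; split => //; first by apply: phi_inj (B1 _ u01) (B2 _ u'01) _; rewrite hu hu'.
by move=> g1c; move: cm; rewrite -hu g1c ltxx.
Qed.

(* Two of the three arms end on the same side of [phi c]. *)
Lemma no_triod_of_embedding (phi : A -> R) (B : set A) :
  (forall p q, B p -> B q -> `|phi p - phi q| <= d p q) ->
  (forall p q, B p -> B q -> phi p = phi q -> p = q) ->
  ~ has_triod B.
Proof.
move=> phi_lip phi_inj.
move=> [c [g1 [g2 [g3 [[p1 p2 p3] [[g10 [g20 g30]] [g11 [g21 g31]] gB meet]]]]]].
have B1 u : 0 <= u <= 1 -> B (g1 u) by move=> /gB [].
have B2 u : 0 <= u <= 1 -> B (g2 u) by move=> /gB [] _ [].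
have B3 u : 0 <= u <= 1 -> B (g3 u) by move=> /gB [] _ [].
have cB : B c by rewrite -g10; exact: B1 _ unit_segment0.
have end_neq (g : R -> A) : (forall u, 0 <= u <= 1 -> B (g u)) -> g 1 <> c ->
    phi (g 1) - phi c != 0.
  move=> Bg g1c; rewrite subr_eq0; apply/negP => /eqP h.
  by apply: g1c; exact: (phi_inj _ _ (Bg _ unit_segment1) cB h).
have := end_neq _ B1 g11; have := end_neq _ B2 g21; have := end_neq _ B3 g31.
have crossing (g g' : R -> A) : is_path g -> is_path g' -> (forall u, 0 <= u <= 1 -> B (g u)) ->
    (forall u, 0 <= u <= 1 -> B (g' u)) -> g 0 = c -> g' 0 = c ->
    (forall u u', 0 <= u <= 1 -> 0 <= u' <= 1 -> g u = g' u' -> g u = c) ->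
    ~ 0 < (phi (g 1) - phi c) * (phi (g' 1) - phi c).
  move=> pg pg' Bg Bg' g0 g'0 gg' /(crossing_arms phi_lip phi_inj pg pg') h.
  have [|u [u' [u01 u'01 guu' gc]]] := h _ g0 g'0; first by move=> u hu; split; [exact: Bg | exact: Bg'].
  by apply: gc; exact: gg' u u' u01 u'01 guu'.
have n12 := crossing _ _ p1 p2 B1 B2 g10 g20 (fun u u' hu hu' => (meet u u' hu hu').1).
have n13 := crossing _ _ p1 p3 B1 B3 g10 g30 (fun u u' hu hu' => (meet u u' hu hu').2.1).
have n23 := crossing _ _ p2 p3 B2 B3 g20 g30 (fun u u' hu hu' => (meet u u' hu hu').2.2).
rewrite !neq_lt => /orP[h3|h3] /orP[h2|h2] /orP[h1|h1];
  first [apply: n12; nra | apply: n13; nra | apply: n23; nra].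
Qed.

Definition mball (p : A) (r : R) : set A := [set q | S q /\ d p q < r].

End Triods.

Section TriodImage.
Variables (R : realType) (A A' : Type) (S : set A) (d : A -> A -> R)
  (S' : set A') (d' : A' -> A' -> R) (T : A -> A').
Hypothesis TS : forall p, S p -> S' (T p).
Hypothesis T_inj : forall p q, S p -> S q -> T p = T q -> p = q.
Hypothesis T_cont : metric_continuous S d d' T.

Lemma is_path_comp g : is_path S d g -> is_path S' d' (T \o g).
Proof.
move=> [gS gc]; split => [u u01|u u01 eps eps0]; first exact/TS/gS.
have [del1 del10 Tdel] := T_cont (gS _ u01) eps0.
have [del del0 gdel] := gc u u01 del1 del10.
by exists del => // u' u'01 uu'; apply: Tdel; [exact: gS | exact: gdel].
Qed.

Lemma has_triod_image p r : S p -> 0 < r ->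
  (forall del, 0 < del -> has_triod S d (mball S d p del)) ->
  has_triod S' d' (mball S' d' (T p) r).
Proof.
move=> Sp r0 triods.
have [del del0 Tdel] := T_cont Sp r0.
have [c [g1 [g2 [g3 [[p1 p2 p3] [[g10 [g20 g30]] [g11 [g21 g31]] gB meet]]]]]] :=
  triods del del0.
have Sg g : is_path S d g -> forall u, 0 <= u <= 1 -> S (g u) by case.
have Sc : S c by rewrite -g10; exact: Sg _ p1 _ unit_segment0.
have end_neq g : is_path S d g -> g 1 <> c -> T (g 1) <> T c.
  by move=> pg g1c /(T_inj (Sg _ pg _ unit_segment1) Sc).
exists (T c), (T \o g1), (T \o g2), (T \o g3); split.
  by split; apply: is_path_comp.
split.
- by rewrite /= g10 g20 g30.
- by split; [|split]; apply: end_neq.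
- move=> u u01; have [[_ b1] [[_ b2] [_ b3]]] := gB u u01.
  have s1 := Sg _ p1 _ u01; have s2 := Sg _ p2 _ u01; have s3 := Sg _ p3 _ u01.
  by split; [|split]; split; [apply: TS | apply: Tdel | apply: TS | apply: Tdel
                              | apply: TS | apply: Tdel].
- move=> u u' u01 u'01; have [m12 [m13 m23]] := meet u u' u01 u'01.
  have s1 := Sg _ p1 _ u01; have s2 := Sg _ p2 _ u01.
  have s2' := Sg _ p2 _ u'01; have s3' := Sg _ p3 _ u'01.
  split; [|split] => /= /T_inj h.
  + by rewrite m12 // h.
  + by rewrite m13 // h.
  + by rewrite m23 // h.
Qed.

End TriodImage.

Lemma basis_cases (N : set nat) :
  (exists a b, [/\ N a, N b & a != b]) \/ (exists k, N k /\ forall j, N j -> j = k) \/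
  (forall k, ~ N k).
Proof.
have [[k Nk]|N0] := pselect (exists k, N k); last by right; right => k Nk; apply: N0; exists k.
have [[j [Nj jk]]|Nk1] := pselect (exists j, N j /\ j != k); first by left; exists j, k.
right; left; exists k; split => // j Nj; apply/eqP.
by apply: contrapT => /negP jk; apply: Nk1; exists j.
Qed.

Section HairyFan.
Variables (R : realType) (V : normedModType R) (t : nat -> seq rat)
  (e : nat -> V) (N : set nat).
Hypotheses (te : type_enum t) (be : basic_seq e N) (ne : normalised e N).
Local Notation C := (Pcarrier t e N).
Local Notation d := (@Pdist R V).

Lemma type_enum_is_type n : (0 < n)%N -> is_type (t n).
Proof. by case: te => + _ _; apply. Qed.

Lemma e_neq0 k : N k -> e k != 0.
Proof. exact: be.1. Qed.

Lemma has_type_line l x k : N k -> (forall j, N j -> j = k) -> is_type l ->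
  has_type e N l x -> exists q : R, 0 < q /\ x = q *: e k.
Proof.
move=> Nk Nk1 [l0 [_ lpos]] [sg [_ [Nsg ->]]].
exists (\sum_(i < size l) (ratr (nth 0 l i) : R)); split; last first.
  by rewrite scaler_suml; apply: eq_bigr => i _; rewrite (Nk1 _ (Nsg i)).
have sz : (0 < size l)%N by rewrite lt0n size_eq0.
rewrite (bigD1 (Ordinal sz)) //=.
have l0pos : (0 : R) < ratr (nth 0 l 0) by rewrite ltr0q; exact/(all_nthP 0 lpos).
apply: (lt_le_trans l0pos); rewrite lerDl; apply: sumr_ge0 => i _.
by rewrite ler0q; apply/ltW/(all_nthP 0 lpos).
Qed.

Lemma has_type_empty l x : (forall k, ~ N k) -> is_type l -> ~ has_type e N l x.
Proof.
move=> N0 [l0 _] [sg [_ [Nsg _]]].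
have sz : (0 < size l)%N by rewrite lt0n size_eq0.
exact: N0 _ (Nsg (Ordinal sz)).
Qed.

Lemma Pdist_base_triangle p a b : C p -> `|a - b| <= d p (PBase a) + d p (PBase b).
Proof.
case: p => [z|n x i s] /=; first by move=> _; rewrite (distrC z a); exact: ler_distD.
move=> [_ _ _ /andP [s0 _]].
apply: (le_trans (ler_distD x a b)); rewrite (distrC a x).
have := normr_ge0 (x - a); have := normr_ge0 (x - b); lra.
Qed.

Definition hair_height (p : ppoint R V) : R :=
  match p with PHair _ _ _ s => s | PBase _ => 0 end.

Lemma ball_in_leg n x i s q : C (PHair n x i s) -> C q ->
  d (PHair n x i s) q < s -> exists s', q = PHair n x i s' /\ 0 < s' <= 1.
Proof.
move=> /= [n0 Tn _ /andP [s0 _]]; case: q => [z|m x' j s'] /=.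
  by move=> _; have := normr_ge0 (x - z); lra.
move=> [m0 Tm _ /andP [s'0 s'1]].
case: eqP => [exx'|_]; last by have := normr_ge0 (x - x'); lra.
case: eqP => [eij|_]; last by lra.
subst x' j.
by move=> _; exists s'; rewrite s'0 s'1 (Tset_index_uniq te be m0 n0 Tm Tn).
Qed.

Lemma no_triod_near_hair n x i s : C (PHair n x i s) ->
  ~ has_triod C d (mball C d (PHair n x i s) s).
Proof.
move=> Cp; apply: (@no_triod_of_embedding _ _ C d hair_height).
  move=> p q [Cp' hp] [Cq hq].
  have [s1 [-> _]] := ball_in_leg Cp Cp' hp.
  have [s2 [-> _]] := ball_in_leg Cp Cq hq.
  by rewrite /= !eqxx.
move=> p q [Cp' hp] [Cq hq].
have [s1 [-> _]] := ball_in_leg Cp Cp' hp.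
by have [s2 [-> _]] := ball_in_leg Cp Cq hq => /= ->.
Qed.

Definition shift (y : V) k (c u : R) : ppoint R V := PBase (y + (u * c) *: e k).

Lemma shift_path y k c : closed_span e N y -> N k -> is_path C d (shift y k c).
Proof.
move=> cy Nk; apply: (@lipschitz_path _ _ _ _ _ `|c|) => //.
  by move=> u _ /=; apply: closed_spanD_scale.
move=> u u' _ _ /=.
by rewrite opprD addrACA subrr add0r -scalerBl normrZ (ne Nk) mulr1 -mulrBl normrM mulrC.
Qed.

Lemma shift_dist y k c u : N k -> d (PBase y) (shift y k c u) = `|u * c|.
Proof. by move=> Nk /=; rewrite opprD addrA subrr add0r normrN normrZ (ne Nk) mulr1. Qed.

Lemma shift0 y k c : shift y k c 0 = PBase y.
Proof. by rewrite /shift mul0r scale0r addr0. Qed.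

Lemma shift1_neq y k c : N k -> c != 0 -> shift y k c 1 <> PBase y.
Proof.
move=> Nk c0 [] /eqP; rewrite -subr_eq0 addrC addKr scaler_eq0 mul1r.
by rewrite (negbTE c0) (negbTE (e_neq0 Nk)).
Qed.

Lemma shift_eq y k c k' c' u u' : shift y k c u = shift y k' c' u' ->
  (u * c) *: e k = (u' * c') *: e k'.
Proof. by move=> [] /addrI. Qed.

Lemma shift_inj y k c c' u u' : N k -> shift y k c u = shift y k c' u' -> u * c = u' * c'.
Proof.
move=> Nk /shift_eq /eqP; rewrite -subr_eq0 -scalerBl scaler_eq0 (negbTE (e_neq0 Nk)).
by rewrite orbF subr_eq0 => /eqP.
Qed.

Lemma shift_eq_base y k c u : N k -> shift y k c u = PBase y -> u * c = 0.
Proof. by move=> Nk; rewrite -(shift0 y k c) => /(shift_inj Nk); rewrite mul0r. Qed.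

Lemma line_dist k a b : N k -> d (PBase (a *: e k)) (PBase (b *: e k)) = `|a - b|.
Proof. by move=> Nk /=; rewrite -scalerBl normrZ (ne Nk) mulr1. Qed.

Lemma mulr_unit_le (u c : R) : 0 <= u <= 1 -> `|u * c| <= `|c|.
Proof. by move=> /andP [u0 u1]; rewrite normrM (ger0_norm u0) ler_piMl. Qed.

(* The segments to [y + r/2 e_a], [y - r/2 e_a] and [y + r/2 e_b]. *)
Lemma triod_near_base_dim2 a b y r : N a -> N b -> a != b -> closed_span e N y -> 0 < r ->
  has_triod C d (mball C d (PBase y) r).
Proof.
move=> Na Nb ab cy r0.
pose rh := r / 2.
have rh0 : 0 < rh by rewrite divr_gt0.
have rhn : rh != 0 by rewrite gt_eqF.
exists (PBase y), (shift y a rh), (shift y a (- rh)), (shift y b rh).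
split; first by split; apply: shift_path.
split.
- by rewrite !shift0.
- by split; [|split]; apply: shift1_neq; rewrite ?oppr_eq0.
- move=> u u01; split; [|split]; (split; [exact: closed_spanD_scale|]);
    rewrite shift_dist //; apply: le_lt_trans (mulr_unit_le _ u01) _;
    by rewrite ?normrN gtr0_norm // /rh; lra.
- move=> u u' /andP [u0 u1] /andP [u'0 u'1].
  split; [|split] => /shift_eq uu'.
  + have : (u * rh - u' * - rh) *: e a = 0 by rewrite scalerBl uu' subrr.
    move/eqP; rewrite scaler_eq0 (negbTE (e_neq0 Na)) orbF => /eqP h.
    have -> : u = 0 by apply/eqP; rewrite eq_le u0 andbT; nra.
    by rewrite shift0.
  + have : (u * rh) *: e a + (- (u' * rh)) *: e b = 0 by rewrite uu' scaleNr subrr.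
    move/(scale2_eq0 be Na Nb ab) => [/eqP + _].
    by rewrite mulf_eq0 (negbTE rhn) orbF => /eqP ->; rewrite shift0.
  + have : (u * - rh) *: e a + (- (u' * rh)) *: e b = 0 by rewrite uu' scaleNr subrr.
    move/(scale2_eq0 be Na Nb ab) => [/eqP + _].
    by rewrite mulf_eq0 oppr_eq0 (negbTE rhn) orbF => /eqP ->; rewrite shift0.
Qed.

Definition leg_path n x i (u : R) : ppoint R V :=
  if u == 0 then PBase x else PHair n x i u.

Lemma leg_path_in n x i u : (0 < n)%N -> Tset t e N n x -> (i < n)%N ->
  0 <= u <= 1 -> C (leg_path n x i u).
Proof.
move=> n0 Tn iN /andP [u0 u1]; rewrite /leg_path; case: eqP => [_|/eqP un0] /=.
  by case: Tn.
by split => //; rewrite u1 andbT lt_neqAle eq_sym un0.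
Qed.

Lemma leg_path_dist n x i u u' : 0 <= u -> 0 <= u' ->
  d (leg_path n x i u) (leg_path n x i u') = `|u - u'|.
Proof.
move=> u0 u'0; rewrite /leg_path.
case: eqP => [->|_]; case: eqP => [->|_] /=;
  rewrite ?subrr ?normr0 ?add0r ?eqxx ?sub0r ?subr0 ?normrN ?addr0 //;
  by rewrite ger0_norm.
Qed.

Lemma leg_pathP n x i : (0 < n)%N -> Tset t e N n x -> (i < n)%N ->
  is_path C d (leg_path n x i).
Proof.
move=> n0 Tn iN; apply: (@lipschitz_path _ _ _ _ _ 1) => //.
  by move=> u; apply: leg_path_in.
by move=> u u' /andP [u0 _] /andP [u'0 _]; rewrite leg_path_dist ?mul1r.
Qed.

(* Near a point [c e_k], [c >= 0], lies a root [q e_k] with [q] rational; the two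
   directions of the line and one leg of its hair form a triod. *)
Lemma triod_near_line_nonneg k c r : N k -> (forall j, N j -> j = k) -> 0 <= c -> 0 < r ->
  has_triod C d (mball C d (PBase (c *: e k)) r).
Proof.
move=> Nk Nk1 c0 r0.
have [q] : exists q : rat, (ratr q : R) \in `]c, c + r / 4[.
  by apply: rat_in_itvoo; rewrite ltrDl divr_gt0.
rewrite in_itv /= => /andP [cq qcr].
have q0 : (0 < q)%R by rewrite -(ltr0q R); lra.
have qtype : is_type [:: q] by split => //; split => //=; rewrite q0.
have [_ tuniq _] := te.
have [n [[n0 tn] _]] := tuniq _ qtype.
pose x := (ratr q : R) *: e k.
have Tnx : Tset t e N n x.
  split; first exact: closed_span_scale.
  rewrite tn; exists (fun _ => k); split; first by move=> i j _; rewrite (ord1 i) (ord1 j).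
  by split => //; rewrite big_ord1.
have cx : closed_span e N x := Tnx.1.
pose rh := Num.min (r / 4) 1.
have rh0 : 0 < rh by rewrite lt_min divr_gt0 ?ltr01.
have rh1 : rh <= 1 by rewrite ge_min lexx orbT.
have rhr : rh <= r / 4 by rewrite ge_min lexx.
have rhn : rh != 0 by rewrite gt_eqF.
have shiftE (c' u : R) : x + (u * c') *: e k = (ratr q + u * c') *: e k.
  by rewrite scalerDl.
exists (PBase x), (shift x k rh), (shift x k (- rh)), (fun u => leg_path n x 0 (u * rh)).
split.
  split; [exact: shift_path | exact: shift_path|].
  apply: (@lipschitz_path _ _ _ _ _ rh); first exact: ltW.
    by move=> u /andP [u0 u1]; apply: leg_path_in => //; apply/andP; split; nra.
  move=> u u' /andP [u0 _] /andP [u'0 _].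
  by rewrite leg_path_dist ?mulr_ge0 ?(ltW rh0) // -mulrBl normrM (gtr0_norm rh0) mulrC.
split.
- by rewrite !shift0 /leg_path mul0r eqxx.
- split; [|split]; first exact: shift1_neq.
    by apply: shift1_neq; rewrite ?oppr_eq0.
  by rewrite /leg_path mul1r (negbTE rhn).
- move=> u /andP [u0 u1].
  have urh : 0 <= u * rh <= rh by apply/andP; split; nra.
  split; [|split]; split.
  + exact: closed_spanD_scale.
  + rewrite /shift shiftE line_dist // ltr_norml; apply/andP; split; lra.
  + exact: closed_spanD_scale.
  + rewrite /shift shiftE line_dist // ltr_norml; apply/andP; split; lra.
  + by apply: leg_path_in => //; apply/andP; split; lra.
  + rewrite /leg_path; case: eqP => _; rewrite /= -scalerBl normrZ (ne Nk) mulr1.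
      by rewrite ltr_norml; apply/andP; split; lra.
    have : `|c - ratr q| < r / 4 by rewrite ltr_norml; apply/andP; split; lra.
    lra.
- move=> u u' /andP [u0 u1] /andP [u'0 u'1].
  split; [|split].
  + move=> /(shift_inj Nk) uu'.
    have -> : u = 0 by apply/eqP; rewrite eq_le u0 andbT; nra.
    by rewrite shift0.
  + rewrite /leg_path; case: eqP => [_ /(shift_eq_base Nk) /eqP|//].
    by rewrite mulf_eq0 (negbTE rhn) orbF => /eqP ->; rewrite shift0.
  + rewrite /leg_path; case: eqP => [_ /(shift_eq_base Nk) /eqP|//].
    by rewrite mulf_eq0 oppr_eq0 (negbTE rhn) orbF => /eqP ->; rewrite shift0.
Qed.

Lemma ball_in_negative_ray k c q : N k -> (forall j, N j -> j = k) -> c < 0 ->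
  C q -> d (PBase (c *: e k)) q < - c -> exists b, b < 0 /\ q = PBase (b *: e k).
Proof.
move=> Nk Nk1 c0; case: q => [z|m x i s] /=.
  move=> cz; have [b ->] := closed_span_line be Nk Nk1 cz.
  rewrite -scalerBl normrZ (ne Nk) mulr1 ltr_norml => /andP [cb _].
  by exists b; split => //; lra.
move=> [m0 [_ hx] _ /andP [s0 _]].
have [q [q0 ->]] := has_type_line Nk Nk1 (type_enum_is_type m0) hx.
rewrite -scalerBl normrZ (ne Nk) mulr1 => h.
have : q - c <= `|c - q| by rewrite distrC ler_norm.
lra.
Qed.

Definition base_norm (p : ppoint R V) : R :=
  match p with PBase z => `|z| | PHair _ _ _ _ => 0 end.

Lemma no_triod_near_negative_ray k c : N k -> (forall j, N j -> j = k) -> c < 0 ->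
  ~ has_triod C d (mball C d (PBase (c *: e k)) (- c)).
Proof.
move=> Nk Nk1 c0; apply: (@no_triod_of_embedding _ _ C d base_norm).
  move=> p q [Cp hp] [Cq hq].
  have [b [_ ->]] := ball_in_negative_ray Nk Nk1 c0 Cp hp.
  have [b' [_ ->]] := ball_in_negative_ray Nk Nk1 c0 Cq hq.
  exact: ler_dist_dist.
move=> p q [Cp hp] [Cq hq].
have [b [b0 ->]] := ball_in_negative_ray Nk Nk1 c0 Cp hp.
have [b' [b'0 ->]] := ball_in_negative_ray Nk Nk1 c0 Cq hq.
by rewrite /= !normrZ (ne Nk) !mulr1 (ltr0_norm b0) (ltr0_norm b'0) => /oppr_inj ->.
Qed.

Lemma triod_near_root n x r : (0 < n)%N -> Tset t e N n x -> 0 < r ->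
  has_triod C d (mball C d (PBase x) r).
Proof.
move=> n0 [cx hx] r0.
have [[a [b [Na Nb ab]]]|[[k [Nk Nk1]]|N0]] := basis_cases N.
- exact: triod_near_base_dim2 Na Nb ab cx r0.
- have [q [q0 ->]] := has_type_line Nk Nk1 (type_enum_is_type n0) hx.
  exact: triod_near_line_nonneg Nk Nk1 (ltW q0) r0.
- by case: (has_type_empty N0 (type_enum_is_type n0) hx).
Qed.

Definition on_leg (x0 : V) (i0 : nat) (p : ppoint R V) : bool :=
  if p is PHair _ x i _ then (x == x0) && (i == i0) else false.

Definition is_hair (p : ppoint R V) : Prop := exists n x i s, p = PHair n x i s.

Lemma path_near_hair g u n x i s : is_path C d g -> 0 <= u <= 1 ->
  g u = PHair n x i s ->
  exists2 del, 0 < del & forall u', 0 <= u' <= 1 -> `|u - u'| < del ->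
    exists s', g u' = PHair n x i s'.
Proof.
move=> [gC gc] u01 gu.
have Cgu : C (PHair n x i s) by rewrite -gu; exact: gC.
have s0 : 0 < s by case: Cgu => _ _ _ /andP [].
have [del del0 gdel] := gc u u01 s s0.
exists del => // u' u'01 uu'.
have := gdel u' u'01 uu'; rewrite gu => /(ball_in_leg Cgu (gC _ u'01)) [s' [-> _]].
by exists s'.
Qed.

Lemma path_on_leg_locally_constant h u x0 i0 : is_path C d h -> 0 <= u <= 1 ->
  h u <> PBase x0 ->
  exists2 del, 0 < del & forall u', 0 <= u' <= 1 -> `|u - u'| < del ->
    on_leg x0 i0 (h u') = on_leg x0 i0 (h u).
Proof.
move=> ph u01; case hu: (h u) => [z|n x i s] zx0; last first.
  have [del del0 hdel] := path_near_hair ph u01 hu.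
  by exists del => // u' u'01 uu'; have [s' ->] := hdel u' u'01 uu'.
have zx00 : 0 < `|z - x0| by rewrite normr_gt0 subr_eq0; apply/eqP => zx; case: zx0; rewrite zx.
have [del del0 hdel] := ph.2 u u01 _ zx00.
exists del => // u' u'01 uu'; move: (hdel u' u'01 uu') (ph.1 u' u'01); rewrite hu /=.
case: (h u') => // m x i s /= hs [_ _ _ /andP [s0 _]]; case: eqP => // xx0.
by move: hs; rewrite xx0 gtrDl ltNge (ltW s0).
Qed.

(* Away from its root, a leg is clopen in P(X). *)
Lemma path_avoiding_root_on_leg h a b x0 i0 : is_path C d h -> 0 <= a -> a <= b -> b <= 1 ->
  (forall u, a <= u <= b -> h u <> PBase x0) ->
  on_leg x0 i0 (h a) = on_leg x0 i0 (h b).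
Proof.
move=> ph a0 ab b1 h_avoid.
apply: (@locally_constant_segment _ (fun u => on_leg x0 i0 (h u))) => // u /andP [au ub].
have u01 : 0 <= u <= 1 by apply/andP; split; lra.
have [del del0 hdel] := path_on_leg_locally_constant i0 ph u01 (h_avoid u (introT andP (conj au ub))).
exists del => // u' /andP [au' u'b]; apply: hdel; apply/andP; split; lra.
Qed.

Lemma path_into_hair z g m x i s : is_path C d g -> g 0 = PBase z ->
  (forall u, 0 < u <= 1 -> is_hair (g u)) -> g 1 = PHair m x i s ->
  x = z /\ (forall u, 0 < u <= 1 -> on_leg x i (g u)).
Proof.
move=> pg g0 g_hair g1.
have legs u : 0 < u <= 1 -> on_leg x i (g u).
  move=> /andP [u0 u1].
  rewrite (@path_avoiding_root_on_leg g u 1 x i pg (ltW u0) u1 (lexx _)) ?g1 /= ?eqxx //.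
  move=> u' /andP [uu' u'1]; have [|n' [x' [i' [s' ->]]]] // := g_hair u'.
  by apply/andP; split => //; lra.
split => //; apply/eqP; apply: contrapT => /negP nxz.
have zx0 : 0 < `|z - x| by rewrite normr_gt0 subr_eq0 eq_sym.
have [del del0 gdel] := pg.2 0 unit_segment0 _ zx0.
pose u := Num.min (del / 2) 1.
have u0 : 0 < u by rewrite lt_min divr_gt0 ?ltr01.
have u1 : u <= 1 by rewrite ge_min lexx orbT.
have udel2 : u <= del / 2 by rewrite ge_min lexx.
have udel : u < del by lra.
have u01 : 0 <= u <= 1 by rewrite (ltW u0) u1.
have := gdel u u01; rewrite sub0r normrN gtr0_norm // => /(_ udel).
move: (pg.1 u u01) (legs u (introT andP (conj u0 u1))); rewrite g0.
case: (g u) => // m' x' i' s' /= [_ _ _ /andP [s'0 _]] /andP [/eqP -> _].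
by rewrite gtrDl ltNge (ltW s'0).
Qed.

Lemma Pcarrier_empty p : (forall k, ~ N k) -> C p -> p = PBase 0.
Proof.
move=> N0; case: p => [z|n x i s] /=; first by move=> cz; rewrite (closed_span_empty be N0 cz).
by move=> [n0 [_ hx] _ _]; case: (has_type_empty N0 (type_enum_is_type n0) hx).
Qed.

End HairyFan.

Section HomeoPair.
Variables (R : realType) (A B : Type) (S : set A) (d : A -> A -> R)
  (S' : set B) (d' : B -> B -> R).

Record homeo_pair (T : A -> B) (g : B -> A) : Prop := HomeoPair {
  homeo_maps : forall p, S p -> S' (T p);
  homeo_inv_maps : forall q, S' q -> S (g q);
  homeo_invK : forall p, S p -> g (T p) = p;
  homeo_K : forall q, S' q -> T (g q) = q;
  homeo_cont : metric_continuous S d d' T;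
  homeo_inv_cont : metric_continuous S' d' d g }.

Lemma homeomorphism_pair T : homeomorphism S d S' d' T -> exists g, homeo_pair T g.
Proof. by move=> [TS [g [gS gT Tg Tc gc]]]; exists g. Qed.

Lemma homeo_inj T g : homeo_pair T g -> forall p q, S p -> S q -> T p = T q -> p = q.
Proof. by move=> [_ _ gT _ _ _] p q Sp Sq Tpq; rewrite -(gT _ Sp) -(gT _ Sq) Tpq. Qed.

Lemma homeo_image T g (P : set A) (Q : set B) : homeo_pair T g ->
  (forall q, Q q -> S' q) -> (forall p, P p -> Q (T p)) -> (forall q, Q q -> P (g q)) ->
  T @` P = Q.
Proof.
move=> [_ _ _ Tg _ _] QS' PQ QP; apply/seteqP; split => [_ [p Pp <-]|q Qq]; first exact: PQ.
by exists (g q); [exact: QP | exact: Tg (QS' _ Qq)].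
Qed.

End HomeoPair.

Lemma homeo_pair_sym (R : realType) (A B : Type) (S : set A) (d : A -> A -> R)
    (S' : set B) (d' : B -> B -> R) T g :
  homeo_pair S d S' d' T g -> homeo_pair S' d' S d g T.
Proof. by case. Qed.

Section HomeoBase.
Variables (R : realType) (V V' : normedModType R) (t : nat -> seq rat)
  (e : nat -> V) (N : set nat) (e' : nat -> V') (N' : set nat).
Hypotheses (te : type_enum t) (be : basic_seq e N) (ne : normalised e N)
  (be' : basic_seq e' N') (ne' : normalised e' N').
Local Notation C := (Pcarrier t e N).
Local Notation C' := (Pcarrier t e' N').
Local Notation d := (@Pdist R V).
Local Notation d' := (@Pdist R V').
Variables (T : ppoint R V -> ppoint R V') (g : ppoint R V' -> ppoint R V).
Hypothesis hTg : homeo_pair C d C' d' T g.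
Let TS := homeo_maps hTg.
Let gS := homeo_inv_maps hTg.
Let gT := homeo_invK hTg.
Let Tg := homeo_K hTg.
Let T_inj := homeo_inj hTg.
Let g_inj := homeo_inj (homeo_pair_sym hTg).
Let T_cont := homeo_cont hTg.
Let g_cont := homeo_inv_cont hTg.

(* Along the negative ray of a line the images could only leave the leg through its
   root, which has triods nearby, whereas the ray has none. *)
Lemma negative_ray_on_leg k c n0 x0 i0 s0 (K : nat) : N k -> (forall j, N j -> j = k) ->
  c < 0 -> T (PBase (c *: e k)) = PHair n0 x0 i0 s0 ->
  on_leg x0 i0 (T (PBase ((c - K%:R) *: e k))).
Proof.
move=> Nk Nk1 c0 Tc0.
have [n00 Tn0 _ _] : C' (PHair n0 x0 i0 s0) by rewrite -Tc0; apply/TS/closed_span_scale.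
pose ga := shift e (c *: e k) k (- K%:R).
have pga : is_path C d ga := shift_path t be ne _ (closed_span_scale be Nk) Nk.
have gaE u : ga u = PBase ((c + u * - K%:R) *: e k) by rewrite /ga /shift scalerDl.
have ga_neg u : 0 <= u -> c + u * - K%:R < 0.
  move=> u0; have : 0 <= u * K%:R by rewrite mulr_ge0.
  lra.
have avoid u : 0 <= u <= 1 -> (T \o ga) u <> PBase x0.
  move=> u01 /= Tx0; have /andP [u0 _] := u01.
  have r0 : 0 < - (c + u * - K%:R) by rewrite oppr_gt0 ga_neg.
  apply: (no_triod_near_negative_ray te be ne Nk Nk1 (ga_neg u u0)).
  rewrite -gaE -(gT (pga.1 u u01)) Tx0; apply: (has_triod_image gS g_inj g_cont) => //; first by case: Tn0.
  by move=> del del0; exact (triod_near_root te be' ne' n00 Tn0 del0).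
have := path_avoiding_root_on_leg te be' i0 (is_path_comp TS T_cont pga) (lexx 0) ler01 (lexx 1) avoid.
by rewrite /= /ga shift0 Tc0 /= !eqxx /shift mul1r -scalerDl => <-.
Qed.

(* Otherwise the images of the points [(c - K) e_k] would lie on one leg, so a
   subsequence converges in P(X'); by continuity of [g] its preimages would converge,
   but they are at mutual distance at least 1. *)
Lemma negative_ray_image_base k c : N k -> (forall j, N j -> j = k) -> c < 0 ->
  exists z, T (PBase (c *: e k)) = PBase z.
Proof.
move=> Nk Nk1 c0; case Tc0: (T _) => [z|n0 x0 i0 s0]; first by exists z.
have [n00 Tn0 i0n0 _] : C' (PHair n0 x0 i0 s0) by rewrite -Tc0; apply/TS/closed_span_scale.
pose y (K : nat) : ppoint R V := PBase ((c - K%:R) *: e k).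
have Cy K : C (y K) by apply: closed_span_scale.
have [s Ty] : exists s : nat -> R, forall K, T (y K) = PHair n0 x0 i0 (s K).
  exists (fun K => hair_height (T (y K))) => K.
  have := negative_ray_on_leg K Nk Nk1 c0 Tc0; have := TS (Cy K); rewrite -/(y K).
  case: (T (y K)) => // m x i s' [m0 Tm _ _] /andP [/eqP xx0 /eqP ii0]; subst x i.
  by rewrite (Tset_index_uniq te be' m0 n00 Tm Tn0).
have s01 K : 0 < s K <= 1 by have := TS (Cy K); rewrite Ty => -[].
have [f [l [f_incr [l01 f_cvg]]]] := cvg_subseq01 s01.
pose q := leg_path n0 x0 i0 l.
have Cq : C' q := leg_path_in n00 Tn0 i0n0 l01.
have dq K : d' q (T (y K)) = `|l - s K|.
  have /andP [sK0 _] := s01 K.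
  have -> : T (y K) = leg_path n0 x0 i0 (s K) by rewrite Ty /leg_path gt_eqF.
  by case/andP: l01 => l0 _; rewrite leg_path_dist ?(ltW sK0).
have half0 : (0 : R) < 2^-1 by rewrite invr_gt0 ltr0n.
have [del del0 gdel] := g_cont Cq half0.
have [J f_near] := f_cvg del del0.
have near_gq j : (J <= j)%N -> d (g q) (y (f j)) < 2^-1.
  by move=> Jj; rewrite -(gT (Cy _)); apply: gdel; [exact: TS | rewrite dq; exact: f_near].
have far : 1 <= `|(c - (f J)%:R) - (c - (f J.+1)%:R)|.
  have -> : (c - (f J)%:R) - (c - (f J.+1)%:R) = (f J.+1)%:R - (f J)%:R by ring.
  by rewrite -natrB ?(ltnW (f_incr J)) // normr_nat ler1n subn_gt0.
have := Pdist_base_triangle ((c - (f J)%:R) *: e k) ((c - (f J.+1)%:R) *: e k) (gS Cq).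
rewrite -scalerBl normrZ (ne Nk) mulr1.
have := near_gq J (leqnn J); have := near_gq J.+1 (leqnSn J); rewrite /y; lra.
Qed.

Lemma homeo_base y : C (PBase y) -> exists z, T (PBase y) = PBase z.
Proof.
move=> Cy; case Ty: (T (PBase y)) => [z|n x i s]; first by exists z.
exfalso.
have Cs : C' (PHair n x i s) by rewrite -Ty; exact: TS.
have s0 : 0 < s by case: Cs => _ _ _ /andP [].
have no_triods : ~ forall del, 0 < del -> has_triod C d (mball C d (PBase y) del).
  move=> triods; apply: (no_triod_near_hair te be' Cs); rewrite -Ty.
  exact (has_triod_image TS T_inj T_cont Cy s0 triods).
have [[a [b [Na Nb ab]]]|[[k [Nk Nk1]]|N0]] := basis_cases N.
- by apply: no_triods => del del0; exact (triod_near_base_dim2 t be ne Na Nb ab Cy del0).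
- have [c yc] := closed_span_line be Nk Nk1 Cy; subst y.
  have [c0|c0] := ltP c 0; first by have [z] := negative_ray_image_base Nk Nk1 c0; rewrite Ty.
  by apply: no_triods => del del0; exact (triod_near_line_nonneg te be ne Nk Nk1 c0 del0).
- have Cs2 : C' (PHair n x i (s / 2)).
    by case: Cs => [n0 Tn iN /andP [_ s1]]; split => //; rewrite divr_gt0 //=; lra.
  have := Tg Cs2; rewrite (Pcarrier_empty te be N0 (gS Cs2)) -(Pcarrier_empty te be N0 Cy) Ty.
  by case; lra.
Qed.

End HomeoBase.

Lemma hair_of_base_inv (R : realType) (V V' : normedModType R) (C : set (ppoint R V))
    (C' : set (ppoint R V')) (T : ppoint R V -> ppoint R V') (g : ppoint R V' -> ppoint R V) :
  (forall p, C p -> C' (T p)) -> (forall p, C p -> g (T p) = p) ->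
  (forall z, C' (PBase z) -> exists w, g (PBase z) = PBase w) ->
  forall p, C p -> is_hair p -> is_hair (T p).
Proof.
move=> TS gT g_base p Cp [n [x [i [s ep]]]]; subst p.
case Tp: (T _) => [z|m x' i' s']; last by exists m, x', i', s'.
have Cz : C' (PBase z) by rewrite -Tp; exact: TS.
have [w] := g_base z Cz.
by rewrite -Tp gT // => -[].
Qed.

Section HomeoLegs.
Variables (R : realType) (V V' : normedModType R) (t : nat -> seq rat)
  (e : nat -> V) (N : set nat) (e' : nat -> V') (N' : set nat).
Hypotheses (te : type_enum t) (be : basic_seq e N) (ne : normalised e N)
  (be' : basic_seq e' N') (ne' : normalised e' N').
Local Notation C := (Pcarrier t e N).
Local Notation C' := (Pcarrier t e' N').
Local Notation d := (@Pdist R V).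
Local Notation d' := (@Pdist R V').
Variables (T : ppoint R V -> ppoint R V') (g : ppoint R V' -> ppoint R V).
Hypothesis hTg : homeo_pair C d C' d' T g.
Let TS := homeo_maps hTg.
Let gS := homeo_inv_maps hTg.
Let gT := homeo_invK hTg.
Let Tg := homeo_K hTg.
Let T_cont := homeo_cont hTg.
Let g_cont := homeo_inv_cont hTg.
Let T_base := homeo_base te be ne be' ne' hTg.
Let g_base := homeo_base te be' ne' be ne (homeo_pair_sym hTg).
Let g_hair := hair_of_base_inv gS Tg T_base.

Lemma homeo_hair p : C p -> is_hair p -> is_hair (T p).
Proof. exact: hair_of_base_inv TS gT g_base p. Qed.

Lemma homeo_leg n x i z : (0 < n)%N -> Tset t e N n x -> (i < n)%N ->
  T (PBase x) = PBase z ->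
  exists m j s, [/\ T (PHair n x i 1) = PHair m z j s, (0 < m)%N, Tset t e' N' m z,
                    (j < m)%N & 0 < s <= 1].
Proof.
move=> n0 Tn iN Tx.
have pleg := leg_pathP n0 Tn iN.
have leg1 : leg_path n x i 1 = PHair n x i 1 by rewrite /leg_path oner_eq0.
have C1 : C (PHair n x i 1) by rewrite -leg1; exact: pleg.1 _ unit_segment1.
have [m [x' [j [s T1]]]] : is_hair (T (PHair n x i 1)).
  by apply: homeo_hair => //; exists n, x, i, 1.
have hair_on u : 0 < u <= 1 -> is_hair ((T \o leg_path n x i) u).
  move=> /andP [u0 u1]; apply: homeo_hair; first by apply: pleg.1; rewrite (ltW u0).
  by rewrite /leg_path gt_eqF //; exists n, x, i, u.
have leg0 : (T \o leg_path n x i) 0 = PBase z by rewrite /= /leg_path eqxx.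
have leg1' : (T \o leg_path n x i) 1 = PHair m x' j s by rewrite /= leg1 T1.
have [x'z _] := path_into_hair te be' (is_path_comp TS T_cont pleg) leg0 hair_on leg1'.
subst x'.
have := TS C1; rewrite T1 => -[m0 Tm jm s01].
by exists m, j, s.
Qed.

(* If two legs of [x] had images on a common leg, pulling back the segment joining the
   images would give a path in the hair between the two legs. *)
Lemma homeo_legs_le n x m z : (0 < n)%N -> Tset t e N n x -> (0 < m)%N -> Tset t e' N' m z ->
  T (PBase x) = PBase z -> (n <= m)%N.
Proof.
move=> n0 Tn m0 Tm Tx.
pose F (i : 'I_n) := if T (PHair n x i 1) is PHair _ _ j _ then j else 0%N.
have legF (i : 'I_n) :
    exists s, [/\ T (PHair n x i 1) = PHair m z (F i) s, (F i < m)%N & 0 < s <= 1].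
  have [m' [j [s [T1 m'0 Tm' jm s01]]]] := homeo_leg n0 Tn (ltn_ord i) Tx.
  have mm := Tset_index_uniq te be' m'0 m0 Tm' Tm; subst m'.
  by exists s; rewrite /F T1.
have C1 (i : 'I_n) : C (PHair n x i 1) by split => //; rewrite ltr01 lexx.
have F_inj : injective F.
  move=> i1 i2 F12; apply: val_inj => /=.
  have [s1 [T1 _ s1b]] := legF i1; have [s2 [T2 F2 s2b]] := legF i2.
  rewrite F12 in T1.
  pose de u : ppoint R V' := PHair m z (F i2) (s1 + u * (s2 - s1)).
  have pde : is_path C' d' de.
    apply: (@lipschitz_path _ _ _ _ _ `|s2 - s1|) => //.
      move=> u /andP [u0 u1]; split => //.
      by move: s1b s2b => /andP [? ?] /andP [? ?]; apply/andP; split; nra.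
    move=> u u' _ _; rewrite /= !eqxx.
    have -> : s1 + u * (s2 - s1) - (s1 + u' * (s2 - s1)) = (s2 - s1) * (u - u') by ring.
    by rewrite normrM.
  have avoid u : 0 <= u <= 1 -> (g \o de) u <> PBase x.
    move=> u01 /=; have [|n' [x' [i' [s' ->]]]] // := g_hair (pde.1 u u01).
    by exists m, z, (F i2), (s1 + u * (s2 - s1)).
  have := path_avoiding_root_on_leg te be i1 (is_path_comp gS g_cont pde)
    (lexx 0) ler01 (lexx 1) avoid.
  rewrite /= /de mul0r addr0 mul1r (addrC s1) subrK -T1 -T2 (gT (C1 i1)) (gT (C1 i2)) /= ?eqxx.
  by move=> /esym/eqP.
suff : (size (map F (enum 'I_n)) <= size (iota 0 m))%N.
  by rewrite size_map size_enum_ord size_iota.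
apply: uniq_leq_size; first by rewrite (map_inj_uniq F_inj) enum_uniq.
by move=> j /mapP [i _ ->]; rewrite mem_iota add0n; have [s [_ ? _]] := legF i.
Qed.

Lemma homeo_root n x : (0 < n)%N -> Tset t e N n x ->
  exists m z, [/\ (0 < m)%N, Tset t e' N' m z & T (PBase x) = PBase z].
Proof.
move=> n0 Tn; have [z Tx] := T_base Tn.1.
have [m [j [s [_ m0 Tm _ _]]]] := homeo_leg n0 Tn n0 Tx.
by exists m, z.
Qed.

End HomeoLegs.

Section HomeoParts.
Variables (R : realType) (V V' : normedModType R) (t : nat -> seq rat)
  (e : nat -> V) (N : set nat) (e' : nat -> V') (N' : set nat).
Hypotheses (te : type_enum t) (be : basic_seq e N) (ne : normalised e N)
  (be' : basic_seq e' N') (ne' : normalised e' N').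
Variables (T : ppoint R V -> ppoint R V') (g : ppoint R V' -> ppoint R V).
Hypothesis hTg : homeo_pair (Pcarrier t e N) (@Pdist R V) (Pcarrier t e' N') (@Pdist R V') T g.

Lemma homeo_Tset n x : (0 < n)%N -> Tset t e N n x ->
  exists z, Tset t e' N' n z /\ T (PBase x) = PBase z.
Proof.
move=> n0 Tn; have [m [z [m0 Tm Tx]]] := homeo_root te be ne be' ne' hTg n0 Tn.
have gz : g (PBase z) = PBase x by rewrite -Tx (homeo_invK hTg) //; case: Tn.
have nm := homeo_legs_le te be ne be' ne' hTg n0 Tn m0 Tm Tx.
have mn := homeo_legs_le te be' ne' be ne (homeo_pair_sym hTg) m0 Tm n0 Tn gz.
by exists z; have -> : n = m by apply/eqP; rewrite eqn_leq nm mn.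
Qed.

Lemma Pbase_image p : Pbase t e N p -> Pbase t e' N' (T p).
Proof.
move=> [Cp [y ep]]; subst p; split; first exact (homeo_maps hTg Cp).
exact (homeo_base te be ne be' ne' hTg Cp).
Qed.

Lemma Phair_image p : Phair t e N p -> Phair t e' N' (T p).
Proof.
move=> [Cp hp].
by split; [exact (homeo_maps hTg Cp) | exact (homeo_hair te be ne be' ne' hTg Cp hp)].
Qed.

Lemma Proots_image p : Proots t e N p -> Proots t e' N' (T p).
Proof.
move=> [Cp [n [x [n0 [Tn ep]]]]]; subst p.
have [m [z [m0 Tm Tx]]] := homeo_root te be ne be' ne' hTg n0 Tn.
by split; [exact (homeo_maps hTg Cp) | exists m, z; rewrite Tx].
Qed.

Lemma PT_image n : (0 < n)%N -> forall p, PT t e N n p -> PT t e' N' n (T p).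
Proof.
move=> n0 p [Cp [x [Tn ep]]]; subst p.
have [z [Tz Tx]] := homeo_Tset n0 Tn.
by split; [exact (homeo_maps hTg Cp) | exists z; rewrite Tx].
Qed.

End HomeoParts.

Theorem mainTheorem10 (R : realType)
  (V V' : completeNormedModType R) (t : nat -> seq rat)
  (e : nat -> V) (N : set nat) (e' : nat -> V') (N' : set nat)
  (T : ppoint R V -> ppoint R V') :
  type_enum t ->
  nbu_basic_seq e N -> nbu_basic_seq e' N' ->
  homeomorphism (Pcarrier t e N) (@Pdist R V)
                (Pcarrier t e' N') (@Pdist R V') T ->
  [/\ T @` Pbase t e N = Pbase t e' N',
      T @` Phair t e N = Phair t e' N',
      T @` Proots t e N = Proots t e' N'
    & forall n, (0 < n)%N -> T @` PT t e N n = PT t e' N' n].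
Proof.
move=> te [be ne _ _] [be' ne' _ _] /homeomorphism_pair [g hTg].
have hgT := homeo_pair_sym hTg.
split => [|||n n0]; apply: (homeo_image hTg); try by move=> q [].
- exact (Pbase_image te be ne be' ne' hTg).
- exact (Pbase_image te be' ne' be ne hgT).
- exact (Phair_image te be ne be' ne' hTg).
- exact (Phair_image te be' ne' be ne hgT).
- exact (Proots_image te be ne be' ne' hTg).
- exact (Proots_image te be' ne' be ne hgT).
- exact (PT_image te be ne be' ne' hTg n0).
- exact (PT_image te be' ne' be ne hgT n0).
Qed.
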